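(* Let $M\ge 2$ be an integer. Consider the $M-1$ identifiers $\mathbf{r}^{(k)}=(r^{(k)}_1,\dots,r^{(k)}_M)$, $k=0,1,\dots,M-2$, of the group whose anchor position is $1$: $r^{(k)}_1=0$, and $(r^{(k)}_2,\dots,r^{(k)}_M)$ is the cyclic right shift by $k$ positions of $(1,2,\dots,M-1)$ (so $\mathbf{r}^{(0)}=(0,1,2,\dots,M-1)$, $\mathbf{r}^{(1)}=(0,M-1,1,2,\dots,M-2)$, $\dots$, $\mathbf{r}^{(M-2)}=(0,2,3,\dots,M-1,1)$). Then the $(M-1)\times M$ integer matrix whose $k$-th row is the coefficient vector $\big(2^{\,r_{\max}-r^{(k)}_1},\dots,2^{\,r_{\max}-r^{(k)}_M}\big)$ with $r_{\max}=M-1$ has rank $M-1$ (over $\mathbb{Q}$).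
   Context: A batch of $M$ data packets $c_1,\dots,c_M$ is encoded as follows: an encoded packet is specified by an identifier $(r_1,\dots,r_M)$ of nonnegative integers; each packet $c_m$ is padded with $r_m$ zero bits at its head (and zeros at its tail so all have equal length), which in ordinary integer arithmetic amounts to forming $2^{r_{\max}-r_m}c_m$ with $r_{\max}=\max_m r_m$, and the padded packets are XORed. The coefficient vector of the encoded packet is $(2^{r_{\max}-r_1},\dots,2^{r_{\max}-r_M})$, and ranks of collections of encoded packets are ranks of the matrices formed by these coefficient vectors, computed in ordinary (rational) arithmetic. In the first-round construction, the identifiers are the bijections $\{1,\dots,M\}\to\{0,1,\dots,M-1\}$ arranged into $M$ groups: the group with anchor position $g$ consists of the $M-1$ identifiers with $r_g=0$ whose entries at the positions other than $g$, read in increasing order of position, form the cyclic right shifts by $k=0,1,\dots,M-2$ of $(1,2,\dots,M-1)$. *)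

From mathcomp Require Import all_boot all_order all_algebra.
Set Implicit Arguments. Unset Strict Implicit. Unset Printing Implicit Defensive.
Import GRing.Theory Num.Theory.

(* Positions are 'I_M, 0-indexed. *)
Definition ident1 (M : nat) (k : nat) (j : 'I_M) : nat :=
  if (j : nat) == 0%N then 0%N
  else nth 0%N (rotr k (iota 1 M.-1)) j.-1.

Definition coef_mx (M : nat) : 'M[rat]_(M.-1, M) :=
  \matrix_(k < M.-1, j < M) ((2%:R : rat) ^+ (M.-1 - @ident1 M k j)%N)%R.

From mathcomp Require Import all_boot all_algebra zify.
Import GRing.Theory Num.Theory.

(* Dropping the anchor column leaves the circulant matrix whose row k is
   (2^((k - i - 1) mod N))_i, where N = M - 1.  Writing P for the cyclic
   shift matrix, this circulant times 2 - P is (2^N - 1) times the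
   identity, so it is invertible and the coefficient matrix has full row
   rank. *)

Local Open Scope ring_scope.

Lemma nth_rotr_iota (N k i : nat) : (k < N)%N -> (i < N)%N ->
  nth 0%N (rotr k (iota 1 N)) i =
  (if (k <= i)%N then i - k + 1 else N - k + i + 1)%N.
Proof.
move=> kN iN; rewrite /rotr size_iota /rot nth_cat size_drop size_iota.
have -> : (N - (N - k) = k)%N by lia.
case: ltnP => ik.
  by rewrite nth_drop nth_iota; lia.
by rewrite nth_take ?nth_iota; lia.
Qed.

Lemma ord_predE (N : nat) (l : 'I_N) :
  (ord_pred l : nat) = if (l : nat) == 0%N then N.-1 else (l : nat).-1.
Proof.
have lN := ltn_ord l; rewrite /ord_pred /=.
case: eqP => [->|l0]; first by rewrite add0n modn_small //; lia.
have -> : ((l + N).-1 = l.-1 + N)%N by lia.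
by rewrite modnDr modn_small //; lia.
Qed.

Lemma mxrank_rsubmx (F : fieldType) (m n1 n2 : nat) (A : 'M[F]_(m, n1 + n2)) :
  (\rank (rsubmx A) <= \rank A)%N.
Proof.
have -> : rsubmx A = A *m col_mx 0 1%:M.
  by rewrite -[A in RHS]hsubmxK mul_row_col mulmx0 add0r mulmx1.
exact: mxrankM_maxl.
Qed.

Section Circulant.

Variable N : nat.
Hypothesis N_gt0 : (0 < N)%N.

Definition circ_exp (k i : 'I_N) : nat :=
  if (i < k)%N then (k - i.+1)%N else (N + k - i.+1)%N.

Definition circ_mx : 'M[rat]_N := \matrix_(k, i) 2 ^+ circ_exp k i.

Definition cyclic_shift_mx : 'M[rat]_N := \matrix_(i, l) (i == ord_pred l)%:R.

Lemma circ_exp_diag (k : 'I_N) : circ_exp k k = N.-1.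
Proof. rewrite /circ_exp ltnn; lia. Qed.

Lemma circ_exp_pred (k l : 'I_N) :
  circ_exp k (ord_pred l) = if k == l then 0%N else (circ_exp k l).+1.
Proof.
have kN := ltn_ord k; have lN := ltn_ord l.
rewrite /circ_exp ord_predE -(inj_eq val_inj) /=.
by case: eqP => l0; case: eqP => kl; repeat case: ifP => /ltP ?; lia.
Qed.

Lemma mul_circ_shift_mx (k l : 'I_N) :
  (circ_mx *m cyclic_shift_mx) k l = circ_mx k (ord_pred l).
Proof.
rewrite mxE (bigD1 (ord_pred l)) //= big1 => [|i /negPf nil].
  by rewrite [cyclic_shift_mx _ _]mxE eqxx mulr1 addr0.
by rewrite [cyclic_shift_mx _ _]mxE nil mulr0.
Qed.

Lemma circ_mx_annihilator :
  circ_mx *m (2%:M - cyclic_shift_mx) = (2 ^+ N - 1)%:M.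
Proof.
apply/matrixP => k l.
rewrite mulmxBr mul_mx_scalar [LHS]mxE [X in _ + X]mxE mul_circ_shift_mx.
rewrite !mxE circ_exp_pred.
case: eqVneq => [<-|_]; last by rewrite -exprS subrr.
by rewrite circ_exp_diag -exprS prednK.
Qed.

Lemma rank_circ_mx : \rank circ_mx = N.
Proof.
apply/eqP; rewrite eqn_leq rank_leq_row /=.
have two_pow_neq1 : (2 : rat) ^+ N - 1 != 0.
  by rewrite subr_eq0 -natrX pnatr_eq1 -(expn0 2) eqn_exp2l // -lt0n.
have {1}-> : N = \rank ((2 ^+ N - 1)%:M : 'M[rat]_N).
  by rewrite -scalemx1 mxrank_scale_nz // mxrank1.
by rewrite -circ_mx_annihilator mxrankM_maxl.
Qed.

End Circulant.

Lemma rsubmx_coef_mx (N : nat) : rsubmx (coef_mx (1 + N)) = circ_mx N.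
Proof.
apply/matrixP => -[k kN] i; have iN := ltn_ord i.
rewrite !mxE /ident1 /= nth_rotr_iota; try lia.
by congr (_ ^+ _); rewrite /circ_exp /=; repeat case: ifP => /leP ?; lia.
Qed.

Theorem lemma1 (M : nat) (hM : (2 <= M)%N) :
  \rank (coef_mx M) = M.-1.
Proof.
case: M hM => [|[|N]] // _.
apply/eqP; rewrite eqn_leq rank_leq_row /=.
rewrite -{1}(@rank_circ_mx N.+1) // -rsubmx_coef_mx.
exact: mxrank_rsubmx.
Qed.
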